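(* Let $\mu\in\mathbb{R}^J$, $T\in\mathbb{R}$, and let $\Lambda\in\mathbb{R}^{J\times J}$ be symmetric positive definite. Consider the constraint \[ \mu^{\top}y+\sqrt{y^{\top}\Lambda y}\le T,\qquad y\in\{0,1\}^J. \tag{C} \] Let $\Delta^{L}$ be an optimal solution of the semidefinite program \[ \min_{\Delta}\ \|\Delta-\Lambda\|_2\ \ \text{s.t.}\ \ 0\preceq\Delta\preceq\Lambda,\ \ 2\sum_{s=1}^J\Delta_{rs}\ge\Delta_{rr}\ \forall r\in[J],\ \ \Delta_{rs}\le 0\ \forall r,s\in[J],\ r\ne s, \] and let $\Delta^{U}$ be an optimal solution of the semidefinite program \[ \min_{\Delta}\ \|\Delta-\Lambda\|_2\ \ \text{s.t.}\ \ \Delta\succeq\Lambda,\ \ 2\sum_{s=1}^J\Delta_{rs}\ge\Delta_{rr}\ \forall r\in[J],\ \ \Delta_{rs}\le 0\ \forall r,s\in[J],\ r\ne s, \] where in both programs $\Delta$ ranges over symmetric $J\times J$ matrices. Then: (a) the function $g^{L}(y)=\mu^{\top}y+\sqrt{y^{\top}\Delta^{L}y}$ is submodular on $\{0,1\}^J$, and every $y$ satisfying (C) satisfies $\mu^{\top}y+\sqrt{y^{\top}\Delta^{L}y}\le T$; (b) the function $g^{U}(y)=\mu^{\top}y+\sqrt{y^{\top}\Delta^{U}y}$ is submodular on $\{0,1\}^J$, and every $y\in\{0,1\}^J$ satisfying $\mu^{\top}y+\sqrt{y^{\top}\Delta^{U}y}\le T$ satisfies (C).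
   Context: $[J]=\{1,\dots,J\}$; $A\preceq B$ means $B-A$ is positive semidefinite; $\|\cdot\|_2$ is the matrix $\ell^2$ norm. A vector $y\in\{0,1\}^J$ is identified with the subset $\{j:y_j=1\}$. A set function $h$ on subsets of $[J]$ is submodular if $h(R\cup\{j\})-h(R)\ge h(S\cup\{j\})-h(S)$ for all $R\subseteq S\subseteq[J]$ and $j\in[J]\setminus S$. *)

From HB Require Import structures.
From mathcomp Require Import all_boot all_order all_algebra.
From mathcomp Require Import boolp classical_sets reals.
Set Implicit Arguments. Unset Strict Implicit. Unset Printing Implicit Defensive.
Import Order.TTheory GRing.Theory Num.Theory.
Local Open Scope ring_scope.
Local Open Scope classical_set_scope.

Section Defs.
Variables (R : realType) (J : nat).

Definition qform (A : 'M[R]_J) (y : 'cV[R]_J) : R := ((y^T *m A) *m y) 0 0.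

Definition symmetricmx (A : 'M[R]_J) : Prop := A^T = A.

Definition psdmx (A : 'M[R]_J) : Prop :=
  symmetricmx A /\ forall y : 'cV[R]_J, 0 <= qform A y.
Definition pdmx (A : 'M[R]_J) : Prop :=
  symmetricmx A /\ forall y : 'cV[R]_J, y != 0 -> 0 < qform A y.

Definition loewner_le (A B : 'M[R]_J) : Prop := psdmx (B - A).

Definition vnorm2 (x : 'cV[R]_J) : R := Num.sqrt (\sum_i (x i 0) ^+ 2).
Definition mnorm2 (A : 'M[R]_J) : R :=
  sup [set vnorm2 (A *m x) | x in [set x : 'cV[R]_J | vnorm2 x = 1]].

Definition diagdom_nonpos (D : 'M[R]_J) : Prop :=
  (forall r : 'I_J, 2 * (\sum_s D r s) >= D r r) /\
  (forall r s : 'I_J, r != s -> D r s <= 0).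

Definition feasL (Lam D : 'M[R]_J) : Prop :=
  symmetricmx D /\ loewner_le 0 D /\ loewner_le D Lam /\ diagdom_nonpos D.
Definition feasU (Lam D : 'M[R]_J) : Prop :=
  symmetricmx D /\ loewner_le Lam D /\ diagdom_nonpos D.

Definition optimal_sol (feas : 'M[R]_J -> 'M[R]_J -> Prop) (Lam D : 'M[R]_J)
  : Prop :=
  feas Lam D /\ forall D', feas Lam D' -> mnorm2 (D - Lam) <= mnorm2 (D' - Lam).

(* y in {0,1}^J identified with the subset {j : y_j = 1} *)
Definition indvec (S : {set 'I_J}) : 'cV[R]_J := \col_i (i \in S)%:R.

Definition gfun (mu : 'cV[R]_J) (A : 'M[R]_J) (S : {set 'I_J}) : R :=
  (mu^T *m indvec S) 0 0 + Num.sqrt (qform A (indvec S)).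

Definition submodular (h : {set 'I_J} -> R) : Prop :=
  forall (Rs S : {set 'I_J}) (j : 'I_J), Rs \subset S -> j \notin S ->
    h (S :|: [set j]) - h S <= h (Rs :|: [set j]) - h Rs.

End Defs.

From Pilot Require Import Defs.
From HB Require Import structures.
From mathcomp Require Import all_boot all_order all_algebra.
From mathcomp Require Import reals.
From mathcomp Require Import lra.
Set Implicit Arguments. Unset Strict Implicit.
Import Order.TTheory GRing.Theory Num.Theory.
Local Open Scope ring_scope.

(* On indicator vectors the quadratic form of [D] is [q(S) = sum_(i,k in S) D i k],
   and adding [j] to [S] increases it by the gain [D j j + 2 sum_(s in S) D j s].
   Nonpositive off-diagonal entries make the gain antitone in [S], and the
   constraint [2 sum_s D j s >= D j j] makes it nonnegative, so [q] is monotone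
   and nonnegative.  Since the increments of a square root shrink when its
   argument grows and the increment gets smaller, [sqrt q] is submodular, and so
   is [g]. *)

Lemma sqrt_incr_antitone (R : rcfType) (a x y : R) :
  0 <= x -> x <= y -> 0 <= a ->
  Num.sqrt (y + a) - Num.sqrt y <= Num.sqrt (x + a) - Num.sqrt x.
Proof.
move=> x0 xy a0; have y0 : 0 <= y by apply: le_trans xy.
suff : Num.sqrt (y + a) + Num.sqrt x <= Num.sqrt (x + a) + Num.sqrt y by lra.
have cross : Num.sqrt (y + a) * Num.sqrt x <= Num.sqrt (x + a) * Num.sqrt y.
  by rewrite -!sqrtrM ?addr_ge0 // ler_wsqrtr //; nra.
rewrite -(@ler_pXn2r _ 2) ?nnegrE ?addr_ge0 ?sqrtr_ge0 //.
rewrite !sqrrD !sqr_sqrtr ?addr_ge0 //; lra.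
Qed.

Lemma sqrt_incr_le (R : rcfType) (a b x y : R) :
  0 <= x -> x <= y -> 0 <= b -> b <= a ->
  Num.sqrt (y + b) - Num.sqrt y <= Num.sqrt (x + a) - Num.sqrt x.
Proof.
move=> x0 xy b0 ba.
apply: le_trans _ (sqrt_incr_antitone x0 xy (le_trans b0 ba)).
by rewrite lerD2r ler_wsqrtr // lerD2l.
Qed.

Lemma homo_subset_setU1 (T : finType) (d : Order.disp_t) (U : porderType d)
    (f : {set T} -> U) :
  (forall (S : {set T}) (x : T), x \notin S -> (f S <= f (x |: S))%O) ->
  {homo f : A B / A \subset B >-> (A <= B)%O}.
Proof.
move=> incr A B; have [n] := ubnP #|B :\: A|; elim: n B => // n IH B ltBA AB.
case: (set_0Vmem (B :\: A)) => [/eqP | [x]].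
  rewrite setD_eq0 => BA.
  by have /eqP -> : A == B by rewrite eqEsubset AB.
rewrite in_setD => /andP [xA xB].
have AB' : A \subset B :\ x.
  by apply/subsetP => z zA; rewrite in_setD1 (subsetP AB) // andbT;
     apply: contraNneq xA => <-.
have ltBA' : (#|(B :\ x) :\: A| < n)%N.
  rewrite -ltnS (leq_trans _ ltBA) // ltnS setDDl setUC -setDDl.
  by rewrite [X in (_ < X)%N](cardsD1 x) in_setD xA xB.
apply: le_trans (IH _ ltBA' AB') _.
by rewrite -{2}(setD1K xB) incr // setD11.
Qed.

Section IndicatorForms.
Variables (R : realType) (J : nat).

Definition qform_set (D : 'M[R]_J) (S : {set 'I_J}) : R :=
  \sum_(i in S) \sum_(k in S) D i k.

Definition qform_gain (D : 'M[R]_J) (S : {set 'I_J}) (j : 'I_J) : R :=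
  D j j + 2 * \sum_(s in S) D j s.

Lemma qform_indvec (D : 'M[R]_J) (S : {set 'I_J}) :
  qform D (indvec R S) = qform_set D S.
Proof.
rewrite /qform /qform_set !mxE (exchange_big _ _ _ _ (fun i => i \in S)) /=.
rewrite [RHS]big_mkcond /=; apply: eq_bigr => k _; rewrite !mxE big_distrl /=.
case: (k \in S); last by rewrite big1 // => i _; rewrite !mxE mulr0.
rewrite [RHS]big_mkcond; apply: eq_bigr => i _; rewrite !mxE.
by case: (i \in S); rewrite /= ?mulr1 ?mul1r ?mul0r.
Qed.

Lemma linform_indvec (mu : 'cV[R]_J) (S : {set 'I_J}) :
  (mu^T *m indvec R S) 0 0 = \sum_(i in S) mu i 0.
Proof.
rewrite mxE [RHS]big_mkcond; apply: eq_bigr => i _; rewrite !mxE.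
by case: (i \in S); rewrite /= ?mulr1 ?mulr0.
Qed.

Lemma qform_loewner_le (A B : 'M[R]_J) (y : 'cV[R]_J) :
  loewner_le A B -> qform A y <= qform B y.
Proof.
by case=> _ /(_ y); rewrite /qform mulmxBr mulmxBl !mxE subr_ge0.
Qed.

Lemma gfun_loewner_le (mu : 'cV[R]_J) (A B : 'M[R]_J) (S : {set 'I_J}) :
  loewner_le A B -> gfun mu A S <= gfun mu B S.
Proof. by move=> AB; rewrite /gfun lerD2l ler_wsqrtr // qform_loewner_le. Qed.

Section DiagDominant.
Variable D : 'M[R]_J.
Hypotheses (symD : Defs.symmetricmx D) (ddD : diagdom_nonpos D).

Lemma qform_set_setU1 (S : {set 'I_J}) (j : 'I_J) : j \notin S ->
  qform_set D (j |: S) = qform_set D S + qform_gain D S j.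
Proof.
move=> jS; have Dsym i k : D i k = D k i by rewrite -[in LHS]symD mxE.
rewrite /qform_set /qform_gain !big_setU1 //=.
under [X in _ + X = _]eq_bigr => i _ do rewrite big_setU1 //= Dsym.
by rewrite big_split /= mulr2n mulrDl mul1r; lra.
Qed.

Lemma qform_gain_le (Rs S : {set 'I_J}) (j : 'I_J) :
  Rs \subset S -> j \notin S -> qform_gain D S j <= qform_gain D Rs j.
Proof.
move=> RS jS; rewrite lerD2l ler_pM2l // (big_setID Rs) /= (setIidPr RS).
rewrite gerDl; apply: sumr_le0 => s; rewrite in_setD => /andP [_ sS].
by apply: ddD.2; apply: contraNneq jS => ->.
Qed.

Lemma qform_gain_ge0 (S : {set 'I_J}) (j : 'I_J) : j \notin S ->
  0 <= qform_gain D S j.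
Proof.
move=> jS; have SNj : S \subset [set~ j].
  by apply/subsetP => s sS; rewrite in_setC1; apply: contraNneq jS => <-.
have jNj : j \notin [set~ j] by rewrite !inE eqxx.
apply: le_trans _ (qform_gain_le SNj jNj); rewrite /qform_gain.
have := ddD.1 j; rewrite (bigD1 j) //=.
under [X in _ -> _ <= _ + 2 * X]eq_bigl => s do rewrite in_setC1.
lra.
Qed.

Lemma qform_set_homo : {homo qform_set D : A B / A \subset B >-> A <= B}.
Proof.
apply: homo_subset_setU1 => S x xS.
by rewrite qform_set_setU1 // lerDl qform_gain_ge0.
Qed.

Lemma qform_set_ge0 (S : {set 'I_J}) : 0 <= qform_set D S.
Proof.
have <- : qform_set D set0 = 0 by rewrite /qform_set big_set0.
exact: qform_set_homo (sub0set S).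
Qed.

Lemma gfun_submodular (mu : 'cV[R]_J) : submodular (gfun mu D).
Proof.
move=> Rs S j RS jS; have jR : j \notin Rs by apply: contra jS => /(subsetP RS).
rewrite /gfun !linform_indvec !qform_indvec ![_ :|: [set j]]setUC.
rewrite !big_setU1 //= !qform_set_setU1 //.
have := sqrt_incr_le (qform_set_ge0 Rs) (qform_set_homo RS)
  (qform_gain_ge0 jS) (qform_gain_le RS jS).
lra.
Qed.

End DiagDominant.
End IndicatorForms.

Unset Implicit Arguments.

Theorem proposition2 (R : realType) (J : nat) (mu : 'cV[R]_J) (T : R)
    (Lam DL DU : 'M[R]_J)
    (hLam : pdmx Lam)
    (hDL : optimal_sol (@feasL R J) Lam DL)
    (hDU : optimal_sol (@feasU R J) Lam DU) :
  (submodular (gfun mu DL) /\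
     forall S : {set 'I_J}, gfun mu Lam S <= T -> gfun mu DL S <= T) /\
  (submodular (gfun mu DU) /\
     forall S : {set 'I_J}, gfun mu DU S <= T -> gfun mu Lam S <= T).
Proof.
have [[symL [_ [DL_le_Lam ddL]]] _] := hDL.
have [[symU [Lam_le_DU ddU]] _] := hDU.
split; split.
- exact: gfun_submodular symL ddL mu.
- by move=> S; apply: le_trans (gfun_loewner_le mu S DL_le_Lam).
- exact: gfun_submodular symU ddU mu.
- by move=> S; apply: le_trans (gfun_loewner_le mu S Lam_le_DU).
Qed.
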